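(* Let $\mathbb{A}=(\mathbb{L},(\lozenge_i)_{i\in\mathsf{Ag}},(\Box_i)_{i\in\mathsf{Ag}})$ be an epistemic Heyting algebra and let $\mathbb{E}=(E,(\sim_i)_{i\in\mathsf{Ag}},(P_i)_{i\in\mathsf{Ag}},\Phi,\mathsf{pre})$ be a probabilistic event structure over $\mathbb{A}$. Then the intermediate algebra $\prod_{\mathbb{E}}\mathbb{A}$ is an epistemic Heyting algebra.
   Context: Fix a set $\mathsf{Ag}$ of agents. A monadic Heyting algebra is a Heyting algebra $\mathbb{L}$ with, for each $i\in\mathsf{Ag}$, monotone unary operations $\lozenge_i,\Box_i$ such that for all $a,b$: $a\leq\lozenge_i a$; $\Box_i a\leq a$; $\lozenge_i(a\vee b)\leq\lozenge_i a\vee\lozenge_i b$; $\Box_i(a\to b)\leq\Box_i a\to\Box_i b$; $\lozenge_i a\leq\Box_i\lozenge_i a$; $\lozenge_i\Box_i a\leq\Box_i a$; $\Box_i(a\to b)\leq\lozenge_i a\to\lozenge_i b$; $\lozenge_i\bot\leq\bot$; $\top\leq\Box_i\top$. An epistemic Heyting algebra is a finite monadic Heyting algebra with $\lozenge_i a\vee\neg\lozenge_i a=\top$ for all $i,a$. A pre-ordered multiset on a set $X$ is a multiset of elements of $X$ in which the $n$ copies $x_1,\dots,x_n$ of any element $x$ of multiplicity $n$ carry the linear order $x_1\prec\cdots\prec x_n$. A probabilistic event structure over $\mathbb{A}$ is a tuple $(E,(\sim_i),(P_i),\Phi,\mathsf{pre})$ where: $E$ is a non-empty finite set; each $\sim_i$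 is an equivalence relation on $E$; each $P_i:E\to\,]0,1]$ satisfies $\sum\{P_i(e')\mid e'\sim_i e\}=1$ for all $e$; $\Phi$ is a finite pre-ordered multiset on $\mathbb{A}$ such that any $a,b\in\Phi$ arising from distinct elements of $\mathbb{A}$ satisfy $a\wedge b=\bot$ or $a<b$ or $b<a$; $\mathsf{pre}$ assigns to each $a\in\Phi$ a probability distribution $\mathsf{pre}(\bullet\mid a)$ on $E$; and for all $a\in\Phi$, $e\in E$, if $\mathsf{pre}(e\mid a)=0$ then $\mathsf{pre}(e\mid b)=0$ for all $b\in\Phi$ with $a<b$ (if $a,b$ arise from distinct elements) or $a\prec b$ (if they are copies of the same element). The intermediate algebra $\prod_{\mathbb{E}}\mathbb{A}=(\prod_{|E|}\mathbb{L},(\lozenge'_i),(\Box'_i))$ has as carrier the set of all maps $f:E\to\mathbb{A}$ with the pointwise Heyting algebra operations, and $(\lozenge'_i f)(e)=\bigvee\{\lozenge_i f(e')\mid e'\sim_i e\}$, $(\Box'_i f)(e)=\bigwedge\{\Box_i f(e')\mid e'\sim_i e\}$. *)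

From Stdlib Require Import Reals List.
From mathcomp Require Import all_boot all_order all_algebra.
From mathcomp Require Import Rstruct.
Set Implicit Arguments. Unset Strict Implicit. Unset Printing Implicit Defensive.
Import GRing.Theory Num.Theory.

Record HAops (T : Type) := HAOps {
  hle : T -> T -> Prop;
  hmeet : T -> T -> T;
  hjoin : T -> T -> T;
  himpl : T -> T -> T;
  hbot : T;
  htop : T }.

Definition is_heyting (T : Type) (O : HAops T) : Prop :=
  ((forall a, hle O a a) /\
      (forall a b c, hle O a b -> hle O b c -> hle O a c) /\
      (forall a b, hle O a b -> hle O b a -> a = b) /\
      (forall a b, hle O (hmeet O a b) a /\ hle O (hmeet O a b) b /\
         forall c, hle O c a -> hle O c b -> hle O c (hmeet O a b)) /\
      (forall a b, hle O a (hjoin O a b) /\ hle O b (hjoin O a b) /\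
         forall c, hle O a c -> hle O b c -> hle O (hjoin O a b) c) /\
      (forall a, hle O (hbot O) a /\ hle O a (htop O)) /\
      (forall a b c, hle O (hmeet O c a) b <-> hle O c (himpl O a b))).

Definition hneg (T : Type) (O : HAops T) (a : T) : T := himpl O a (hbot O).
Definition hlt (T : Type) (O : HAops T) (a b : T) : Prop := hle O a b /\ a <> b.

Definition is_monadic_HA (Ag T : Type) (O : HAops T) (dia box : Ag -> T -> T)
  : Prop :=
  is_heyting O /\
  forall i : Ag,
    ((forall a b, hle O a b -> hle O (dia i a) (dia i b)) /\
      (forall a b, hle O a b -> hle O (box i a) (box i b)) /\
      (forall a, hle O a (dia i a)) /\
      (forall a, hle O (box i a) a) /\
      (forall a b, hle O (dia i (hjoin O a b)) (hjoin O (dia i a) (dia i b))) /\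
      (forall a b, hle O (box i (himpl O a b)) (himpl O (box i a) (box i b))) /\
      (forall a, hle O (dia i a) (box i (dia i a))) /\
      (forall a, hle O (dia i (box i a)) (box i a)) /\
      (forall a b, hle O (box i (himpl O a b)) (himpl O (dia i a) (dia i b))) /\
      (hle O (dia i (hbot O)) (hbot O)) /\
      (hle O (htop O) (box i (htop O)))).

Definition finite_carrier (T : Type) : Prop := exists s : list T, forall x, In x s.

Definition is_epistemic_HA (Ag T : Type) (O : HAops T) (dia box : Ag -> T -> T)
  : Prop :=
  [/\ finite_carrier T, is_monadic_HA O dia box &
      forall i a, hjoin O (dia i a) (hneg O (dia i a)) = htop O].

(* E is a finite type; sim i is the (boolean) relation ~_i; P i the
   probability assignment; the finite pre-ordered multiset Phi is given as
   a family phi : 'I_n -> T (element k of Phi is the value phi k); copies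
   of the same element are linearly ordered by their position (k < l);
   pre k is the distribution pre(. | phi k) on E. *)
Definition prob_event_structure (Ag T : Type) (O : HAops T)
  (E : finType) (sim : Ag -> rel E) (P : Ag -> E -> R)
  (n : nat) (phi : 'I_n -> T) (pre : 'I_n -> E -> R) : Prop :=
  ((0 < #|E|)%N /\
      (forall i, [/\ reflexive (sim i), symmetric (sim i) & transitive (sim i)]) /\
      (forall i e, (0 < P i e)%R /\ (P i e <= 1)%R) /\
      (forall i e, (\sum_(e' | sim i e' e) P i e')%R = 1%R) /\
      (forall k l, phi k <> phi l ->
         hmeet O (phi k) (phi l) = hbot O \/ hlt O (phi k) (phi l)
         \/ hlt O (phi l) (phi k)) /\
      (forall k, (forall e, (0 <= pre k e)%R) /\ (\sum_e pre k e)%R = 1%R) /\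
      (forall k l e, pre k e = 0%R ->
         (phi k <> phi l /\ hlt O (phi k) (phi l)) \/
         (phi k = phi l /\ (k < l)%N) ->
         pre l e = 0%R)).

Definition pointwise_ops (T : Type) (O : HAops T) (E : finType)
  : HAops (E -> T) :=
  HAOps (fun f g => forall e, hle O (f e) (g e))
        (fun f g e => hmeet O (f e) (g e))
        (fun f g e => hjoin O (f e) (g e))
        (fun f g e => himpl O (f e) (g e))
        (fun _ => hbot O) (fun _ => htop O).

Definition inter_dia (Ag T : Type) (O : HAops T) (dia : Ag -> T -> T)
  (E : finType) (sim : Ag -> rel E) (i : Ag) (f : E -> T) : E -> T :=
  fun e => \big[hjoin O / hbot O]_(e' | sim i e' e) dia i (f e').

Definition inter_box (Ag T : Type) (O : HAops T) (box : Ag -> T -> T)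
  (E : finType) (sim : Ag -> rel E) (i : Ag) (f : E -> T) : E -> T :=
  fun e => \big[hmeet O / htop O]_(e' | sim i e' e) box i (f e').

From Stdlib Require Import Reals FunctionalExtensionality.
From mathcomp Require Import all_boot all_order all_algebra.
From mathcomp Require Import Rstruct.
Set Implicit Arguments. Unset Strict Implicit. Unset Printing Implicit Defensive.

(* The lifted modalities of agent i at e are the join of the dia_i f e' and
   the meet of the box_i f e' over the ~_i-class of e, so they are constant on
   ~_i-classes and most monadic axioms lift from the base algebra. The two
   interaction axioms and the excluded middle rest on one observation: dia_i is
   idempotent (dia dia a <= dia box dia a <= box dia a <= dia a). Hence a lifted
   diamond, a join of dia_i-images, is pointwise fixed by dia_i, and a lifted
   box, a meet of box_i-images, is pointwise dia_i-closed because
   dia_i box_i <= box_i. *)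

Section HeytingTheory.
Variables (T : Type) (O : HAops T).
Hypothesis HO : is_heyting O.

Lemma hle_refl a : hle O a a. Proof. by case: HO. Qed.

Lemma hle_trans b a c : hle O a b -> hle O b c -> hle O a c.
Proof. by case: HO => _ [H _]; apply: H. Qed.

Lemma hle_anti a b : hle O a b -> hle O b a -> a = b.
Proof. by case: HO => _ [_ [H _]]; apply: H. Qed.

Lemma hleIl a b : hle O (hmeet O a b) a.
Proof. by case: HO => _ [_ [_ [H _]]]; case: (H a b). Qed.

Lemma hleIr a b : hle O (hmeet O a b) b.
Proof. by case: HO => _ [_ [_ [H _]]]; case: (H a b) => _ []. Qed.

Lemma hlexI a b c : hle O c a -> hle O c b -> hle O c (hmeet O a b).
Proof. by case: HO => _ [_ [_ [H _]]]; case: (H a b) => _ [_]; apply. Qed.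

Lemma hleUl a b : hle O a (hjoin O a b).
Proof. by case: HO => _ [_ [_ [_ [H _]]]]; case: (H a b). Qed.

Lemma hleUr a b : hle O b (hjoin O a b).
Proof. by case: HO => _ [_ [_ [_ [H _]]]]; case: (H a b) => _ []. Qed.

Lemma hleUx a b c : hle O a c -> hle O b c -> hle O (hjoin O a b) c.
Proof. by case: HO => _ [_ [_ [_ [H _]]]]; case: (H a b) => _ [_]; apply. Qed.

Lemma hle0x a : hle O (hbot O) a.
Proof. by case: HO => _ [_ [_ [_ [_ [H _]]]]]; case: (H a). Qed.

Lemma hlex1 a : hle O a (htop O).
Proof. by case: HO => _ [_ [_ [_ [_ [H _]]]]]; case: (H a). Qed.

Lemma hle_impl a b c : hle O (hmeet O c a) b <-> hle O c (himpl O a b).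
Proof. by case: HO => _ [_ [_ [_ [_ [_ H]]]]]. Qed.

Lemma hmeet_impl_le a b : hle O (hmeet O (himpl O a b) a) b.
Proof. by apply/hle_impl; apply: hle_refl. Qed.

Lemma hleI2 a b a' b' :
  hle O a a' -> hle O b b' -> hle O (hmeet O a b) (hmeet O a' b').
Proof.
by move=> aa' bb'; apply: hlexI; [apply: hle_trans aa'; apply: hleIl |
  apply: hle_trans bb'; apply: hleIr].
Qed.

Lemma hleU2 a b a' b' :
  hle O a a' -> hle O b b' -> hle O (hjoin O a b) (hjoin O a' b').
Proof.
by move=> aa' bb'; apply: hleUx; [apply: hle_trans aa' _; apply: hleUl |
  apply: hle_trans bb' _; apply: hleUr].
Qed.

Lemma hjoins_le (I : Type) (r : seq I) (P : pred I) (F : I -> T) c :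
  (forall j, P j -> hle O (F j) c) ->
  hle O (\big[hjoin O/hbot O]_(j <- r | P j) F j) c.
Proof. by move=> Fc; elim/big_rec: _ => [|j x /Fc]; [apply: hle0x | apply: hleUx]. Qed.

Lemma hmeets_ge (I : Type) (r : seq I) (P : pred I) (F : I -> T) c :
  (forall j, P j -> hle O c (F j)) ->
  hle O c (\big[hmeet O/htop O]_(j <- r | P j) F j).
Proof. by move=> cF; elim/big_rec: _ => [|j x /cF]; [apply: hlex1 | apply: hlexI]. Qed.

Lemma hmeetC_le a b : hle O (hmeet O a b) (hmeet O b a).
Proof. by apply: hlexI; [apply: hleIr | apply: hleIl]. Qed.

Lemma hmeet_joins_le (I : Type) (r : seq I) (P : pred I) (F : I -> T) c d :
  (forall j, P j -> hle O (hmeet O c (F j)) d) ->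
  hle O (hmeet O c (\big[hjoin O/hbot O]_(j <- r | P j) F j)) d.
Proof.
move=> cFd; apply: hle_trans (hmeetC_le _ _) _; apply/hle_impl.
apply: hjoins_le => j /cFd Fjd; apply/hle_impl.
exact: hle_trans (hmeetC_le _ _) Fjd.
Qed.

Lemma hjoins_sup (I : finType) (P : pred I) (F : I -> T) j :
  P j -> hle O (F j) (\big[hjoin O/hbot O]_(i | P i) F i).
Proof.
move=> Pj; have: j \in index_enum I by rewrite mem_index_enum.
elim: (index_enum I) => [//|x r IH]; rewrite big_cons in_cons.
case/orP=> [/eqP <- | jr]; first by rewrite Pj; apply: hleUl.
case: (P x); last exact: IH.
by apply: hle_trans (IH jr) _; apply: hleUr.
Qed.

Lemma hmeets_inf (I : finType) (P : pred I) (F : I -> T) j :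
  P j -> hle O (\big[hmeet O/htop O]_(i | P i) F i) (F j).
Proof.
move=> Pj; have: j \in index_enum I by rewrite mem_index_enum.
elim: (index_enum I) => [//|x r IH]; rewrite big_cons in_cons.
case/orP=> [/eqP <- | jr]; first by rewrite Pj; apply: hleIl.
case: (P x); last exact: IH.
by apply: hle_trans (IH jr); apply: hleIr.
Qed.

End HeytingTheory.

Lemma pointwise_heyting (T : Type) (O : HAops T) (E : finType) :
  is_heyting O -> is_heyting (pointwise_ops O E).
Proof.
move=> HO; split; first by move=> f e; apply: hle_refl.
split; first by move=> f g h fg gh e; apply: hle_trans (fg e) (gh e).
split.
  move=> f g fg gf; apply: functional_extensionality => e.
  exact: hle_anti (fg e) (gf e).
split; first by move=> f g; split; [|split] => [e|e|h hf hg e];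
  [apply: hleIl | apply: hleIr | apply: hlexI].
split; first by move=> f g; split; [|split] => [e|e|h fh gh e];
  [apply: hleUl | apply: hleUr | apply: hleUx].
split; first by move=> f; split=> e; [apply: hle0x | apply: hlex1].
by move=> f g h; split=> fgh e; apply/(hle_impl HO); apply: fgh.
Qed.

Lemma finite_carrier_fun (E : finType) (T : Type) (d : T) :
  finite_carrier T -> finite_carrier (E -> T).
Proof.
case=> s sT.
have agree (L : seq E) : exists FL : list (E -> T),
    forall f, exists2 g, List.In g FL & {in L, g =1 f}.
  elim: L => [|x L [FL IH]].
    by exists [:: fun=> d] => f; exists (fun=> d); [left|].
  exists (List.flat_map
    (fun g => List.map (fun t e => if e == x then t else g e) s) FL) => f.
  have [g gFL gf] := IH f.
  exists (fun e => if e == x then f x else g e).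
    apply/List.in_flat_map; exists g; split=> //.
    by apply/List.in_map_iff; exists (f x).
  by move=> e; rewrite in_cons; case: eqP => [-> //|_ /= eL]; apply: gf.
have [FL HFL] := agree (enum E).
exists FL => f; have [g gFL gf] := HFL f.
suff -> : f = g by [].
by apply: functional_extensionality => e; rewrite gf // mem_enum.
Qed.

Definition monadic_ops (T : Type) (O : HAops T) (dia box : T -> T) : Prop :=
  (forall a b, hle O a b -> hle O (dia a) (dia b)) /\
  (forall a b, hle O a b -> hle O (box a) (box b)) /\
  (forall a, hle O a (dia a)) /\
  (forall a, hle O (box a) a) /\
  (forall a b, hle O (dia (hjoin O a b)) (hjoin O (dia a) (dia b))) /\
  (forall a b, hle O (box (himpl O a b)) (himpl O (box a) (box b))) /\
  (forall a, hle O (dia a) (box (dia a))) /\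
  (forall a, hle O (dia (box a)) (box a)) /\
  (forall a b, hle O (box (himpl O a b)) (himpl O (dia a) (dia b))) /\
  (hle O (dia (hbot O)) (hbot O)) /\
  (hle O (htop O) (box (htop O))).

Section Lifting.
Variables (Ag T : Type) (O : HAops T) (dia box : Ag -> T -> T).
Variables (E : finType) (sim : Ag -> rel E) (i : Ag).
Hypothesis HO : is_heyting O.
Hypotheses (sim_refl : reflexive (sim i)) (sim_sym : symmetric (sim i))
  (sim_trans : transitive (sim i)).
Hypothesis dia_mono : forall a b, hle O a b -> hle O (dia i a) (dia i b).
Hypothesis box_mono : forall a b, hle O a b -> hle O (box i a) (box i b).
Hypothesis dia_ext : forall a, hle O a (dia i a).
Hypothesis box_defl : forall a, hle O (box i a) a.
Hypothesis dia_join :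
  forall a b, hle O (dia i (hjoin O a b)) (hjoin O (dia i a) (dia i b)).
Hypothesis box_impl :
  forall a b, hle O (box i (himpl O a b)) (himpl O (box i a) (box i b)).
Hypothesis dia_le_box_dia : forall a, hle O (dia i a) (box i (dia i a)).
Hypothesis dia_box_le_box : forall a, hle O (dia i (box i a)) (box i a).
Hypothesis box_impl_dia :
  forall a b, hle O (box i (himpl O a b)) (himpl O (dia i a) (dia i b)).
Hypothesis dia_bot : hle O (dia i (hbot O)) (hbot O).
Hypothesis box_top : hle O (htop O) (box i (htop O)).

Local Notation O' := (pointwise_ops O E).
Local Notation dia' := (inter_dia O dia sim i).
Local Notation box' := (inter_box O box sim i).

Lemma sim_classE e e' : sim i e' e -> sim i ^~ e' =1 sim i ^~ e.
Proof.
move=> e'e x; apply/idP/idP => [xe'|xe]; first exact: sim_trans xe' e'e.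
by apply: sim_trans xe _; rewrite sim_sym.
Qed.

Lemma inter_dia_sim f e e' : sim i e' e -> dia' f e' = dia' f e.
Proof. by move/sim_classE; apply: eq_bigl. Qed.

Lemma inter_box_sim f e e' : sim i e' e -> box' f e' = box' f e.
Proof. by move/sim_classE; apply: eq_bigl. Qed.

Lemma le_inter_dia f e e' : sim i e' e -> hle O (dia i (f e')) (dia' f e).
Proof. exact: hjoins_sup. Qed.

Lemma inter_box_le f e e' : sim i e' e -> hle O (box' f e) (box i (f e')).
Proof. exact: hmeets_inf. Qed.

Lemma dia_idem a : hle O (dia i (dia i a)) (dia i a).
Proof.
apply: (hle_trans HO _ (box_defl _)).
apply: (hle_trans HO _ (dia_box_le_box _)).
exact: dia_mono (dia_le_box_dia _).
Qed.

Lemma dia_closed_joins (I : Type) (r : seq I) (Q : pred I) (F : I -> T) :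
  (forall j, Q j -> hle O (dia i (F j)) (F j)) ->
  hle O (dia i (\big[hjoin O/hbot O]_(j <- r | Q j) F j))
        (\big[hjoin O/hbot O]_(j <- r | Q j) F j).
Proof.
move=> FQ; elim/big_rec: _ => // j x /FQ Fj dx.
exact: (hle_trans HO (dia_join _ _) (hleU2 HO Fj dx)).
Qed.

Lemma dia_closed_meets (I : Type) (r : seq I) (Q : pred I) (F : I -> T) :
  (forall j, Q j -> hle O (dia i (F j)) (F j)) ->
  hle O (dia i (\big[hmeet O/htop O]_(j <- r | Q j) F j))
        (\big[hmeet O/htop O]_(j <- r | Q j) F j).
Proof.
move=> FQ; elim/big_rec: _ => [|j x /FQ Fj dx]; first exact: hlex1.
by apply: hlexI => //; [apply: (hle_trans HO _ Fj) | apply: (hle_trans HO _ dx)];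
  apply: dia_mono; [apply: hleIl | apply: hleIr].
Qed.

Lemma inter_dia_fixed f e : dia i (dia' f e) = dia' f e.
Proof.
apply: (hle_anti HO); last exact: dia_ext.
by apply: dia_closed_joins => e' _; apply: dia_idem.
Qed.

Lemma inter_box_dia_closed f e : hle O (dia i (box' f e)) (box' f e).
Proof. by apply: dia_closed_meets => e' _; apply: dia_box_le_box. Qed.

Lemma inter_dia_mono f g : hle O' f g -> hle O' (dia' f) (dia' g).
Proof.
move=> fg e; apply: (hjoins_le HO) => e' e'e.
exact: (hle_trans HO (dia_mono (fg e')) (le_inter_dia _ e'e)).
Qed.

Lemma inter_box_mono f g : hle O' f g -> hle O' (box' f) (box' g).
Proof.
move=> fg e; apply: (hmeets_ge HO) => e' e'e.
exact: (hle_trans HO (inter_box_le _ e'e) (box_mono (fg e'))).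
Qed.

Lemma inter_dia_ext f : hle O' f (dia' f).
Proof. by move=> e; apply: (hle_trans HO (dia_ext _) (le_inter_dia _ (sim_refl e))). Qed.

Lemma inter_box_defl f : hle O' (box' f) f.
Proof. by move=> e; apply: (hle_trans HO (inter_box_le _ (sim_refl e)) (box_defl _)). Qed.

Lemma inter_dia_join f g :
  hle O' (dia' (hjoin O' f g)) (hjoin O' (dia' f) (dia' g)).
Proof.
move=> e; apply: (hjoins_le HO) => e' e'e.
apply: (hle_trans HO (dia_join _ _)).
by apply: (hleU2 HO); apply: le_inter_dia.
Qed.

Lemma inter_box_impl f g :
  hle O' (box' (himpl O' f g)) (himpl O' (box' f) (box' g)).
Proof.
move=> e; apply/(hle_impl HO); apply: (hmeets_ge HO) => e' e'e.
apply: (hle_trans HO _ (hmeet_impl_le HO (box i (f e')) (box i (g e')))).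
apply: (hleI2 HO); last exact: inter_box_le.
exact: (hle_trans HO (inter_box_le _ e'e) (box_impl _ _)).
Qed.

Lemma inter_box_impl_dia f g :
  hle O' (box' (himpl O' f g)) (himpl O' (dia' f) (dia' g)).
Proof.
move=> e; apply/(hle_impl HO); apply: (hmeet_joins_le HO) => e' e'e.
apply: (hle_trans HO _ (le_inter_dia _ e'e)).
apply: (hle_trans HO _ (hmeet_impl_le HO (dia i (f e')) (dia i (g e')))).
apply: (hleI2 HO (hle_trans HO (inter_box_le _ e'e) (box_impl_dia _ _))).
exact: hle_refl.
Qed.

Lemma inter_dia_le_box_dia f : hle O' (dia' f) (box' (dia' f)).
Proof.
move=> e; apply: (hmeets_ge HO) => e' e'e; rewrite (inter_dia_sim _ e'e).
by have := dia_le_box_dia (dia' f e); rewrite inter_dia_fixed.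
Qed.

Lemma inter_dia_box_le_box f : hle O' (dia' (box' f)) (box' f).
Proof.
move=> e; apply: (hjoins_le HO) => e' e'e; rewrite (inter_box_sim _ e'e).
exact: inter_box_dia_closed.
Qed.

Lemma inter_dia_bot : hle O' (dia' (hbot O')) (hbot O').
Proof. by move=> e; apply: (hjoins_le HO) => e' _; apply: dia_bot. Qed.

Lemma inter_box_top : hle O' (htop O') (box' (htop O')).
Proof. by move=> e; apply: (hmeets_ge HO) => e' _; apply: box_top. Qed.

Lemma inter_dia_excluded_middle :
  (forall a, hjoin O (dia i a) (hneg O (dia i a)) = htop O) ->
  forall f, hjoin O' (dia' f) (hneg O' (dia' f)) = htop O'.
Proof.
move=> em f; apply: functional_extensionality => e.
by rewrite /= /hneg -inter_dia_fixed; apply: em.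
Qed.

End Lifting.

Lemma monadic_ops_inter (Ag T : Type) (O : HAops T) (dia box : Ag -> T -> T)
    (E : finType) (sim : Ag -> rel E) (i : Ag) :
  is_heyting O ->
  [/\ reflexive (sim i), symmetric (sim i) & transitive (sim i)] ->
  monadic_ops O (dia i) (box i) ->
  monadic_ops (pointwise_ops O E) (inter_dia O dia sim i) (inter_box O box sim i).
Proof.
move=> HO [refl sym trans] [dm [bm [de [bd [dj [bi [dbd [dbb [bid [d0 b1]]]]]]]]]].
split; first exact: inter_dia_mono.
split; first exact: inter_box_mono.
split; first exact: inter_dia_ext.
split; first exact: inter_box_defl.
split; first exact: inter_dia_join.
split; first exact: inter_box_impl.
split; first exact: inter_dia_le_box_dia.
split; first exact: inter_dia_box_le_box.
split; first exact: inter_box_impl_dia.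
split; first exact: inter_dia_bot.
exact: inter_box_top.
Qed.

Theorem proposition3 (Ag T : Type) (O : HAops T) (dia box : Ag -> T -> T)
  (E : finType) (sim : Ag -> rel E) (P : Ag -> E -> R)
  (n : nat) (phi : 'I_n -> T) (pre : 'I_n -> E -> R) :
  is_epistemic_HA O dia box ->
  prob_event_structure O sim P phi pre ->
  is_epistemic_HA (pointwise_ops O E) (inter_dia O dia sim) (inter_box O box sim).
Proof.
case=> fin [HO monad] em [_ [sim_equiv _]].
split=> [||i].
- exact: finite_carrier_fun (hbot O) fin.
- split=> [|i]; first exact: pointwise_heyting.
  exact: monadic_ops_inter HO (sim_equiv i) (monad i).
- have [refl _ _] := sim_equiv i.
  have [dm [_ [de [bd [dj [_ [dbd [dbb [_ [d0 _]]]]]]]]]] := monad i.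
  exact: inter_dia_excluded_middle (em i).
Qed.
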